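(* (i) For every $r\in\mathbb N$ and non-negative integers $n_1,\dots,n_r,m_1,\dots,m_r$, with $n=\sum_jn_j$, $m=\sum_jm_j$, $$\lim_{N\to\infty}\Big(\Big\langle\prod_{j=1}^r(E^N_-)^{n_j}(E^N_+)^{m_j}\Big\rangle^N_\beta-\big\langle(E^N_-)^n(E^N_+)^m\big\rangle^N_\beta\Big)=0,$$ so the limits of the two expectations coincide. (ii) If $X^N$ are operators on $\mathbb C^{2^N}\otimes\mathbb C^{2^N}$ with $\lim_{N\to\infty}\langle (X^N)^\dagger X^N\rangle^N_\beta=\lim_{N\to\infty}\|X^N|\Omega^N_\beta\rangle\|^2=0$, then for all non-negative integers $n,m$, $\lim_{N\to\infty}\langle(E^N_-)^n(E^N_+)^mX^N\rangle^N_\beta=0$.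
   Context: Fix real $\epsilon$, $T_c>0$, $\beta>0$. For $N\in\mathbb N$, on $(\mathbb C^2)^{\otimes N}$ let $S^N_i=\frac12\sum_{k=1}^N\sigma^{(k)}_i$ ($\sigma^{(k)}_i$ Pauli matrices at site $k$), $S^N_\pm=S^N_x\pm iS^N_y$, $H^N=-2\epsilon S^N_z-\frac{2T_c}{N}S^N_+S^N_-$, $\rho^N_\beta=e^{-\beta H^N}/\mathrm{Tr}\,e^{-\beta H^N}=\sum_ar_a|e_a\rangle\langle e_a|$ for an orthonormal eigenbasis $\{|e_a\rangle\}$ of $H^N$ of joint eigenvectors of $(\vec S^N)^2,S^N_z$. Let $|\Omega^N_\beta\rangle=\sum_a\sqrt{r_a}|e_a\rangle\otimes|e_a\rangle$ and $\langle X\rangle^N_\beta=\langle\Omega^N_\beta|X|\Omega^N_\beta\rangle$. Let $\mathfrak c=\lim_N(N^{-2}\mathrm{Tr}[\rho^N_\beta S^N_+S^N_-])^{1/2}$, assumed $>0$, and $E^N_\pm=\frac1{\mathfrak cN}S^N_\pm\otimes\mathbb I$. *)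

From HB Require Import structures.
From mathcomp Require Import all_boot all_order all_algebra.
From mathcomp Require Import all_classical all_reals all_analysis.
From mathcomp Require Import complex mxtens.

Set Implicit Arguments.
Unset Strict Implicit.
Unset Printing Implicit Defensive.

Import Order.TTheory GRing.Theory Num.Theory.
Local Open Scope ring_scope.
Local Open Scope complex_scope.

Section Model.
Variable R : realType.
Local Notation C := R[i].

(* Computational basis of (C^2)^{\otimes N}: basis vector |i>, i < 2^N;
   the spin at site k (0 <= k < N) is the k-th binary digit of i,
   digit 0 = spin up (sigma_z = +1), digit 1 = spin down. *)
Definition bit (i k : nat) : bool := odd (i %/ 2 ^ k).

Definition others_eq (N : nat) (k : 'I_N) (i j : nat) : bool :=
  [forall l : 'I_N, (l != k) ==> (bit i l == bit j l)].

Definition sigma_x (N : nat) (k : 'I_N) : 'M[C]_(2 ^ N) :=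
  \matrix_(i, j) (if (bit i k != bit j k) && others_eq k i j then 1 else 0).

Definition sigma_y (N : nat) (k : 'I_N) : 'M[C]_(2 ^ N) :=
  \matrix_(i, j)
    (if others_eq k i j then
       (if ~~ bit i k && bit j k then - 'i
        else if bit i k && ~~ bit j k then 'i else 0)
     else 0).

Definition sigma_z (N : nat) (k : 'I_N) : 'M[C]_(2 ^ N) :=
  \matrix_(i, j) (if i == j then (if bit i k then -1 else 1) else 0).

Definition Sx (N : nat) : 'M[C]_(2 ^ N) := 2^-1 *: \sum_(k < N) sigma_x k.
Definition Sy (N : nat) : 'M[C]_(2 ^ N) := 2^-1 *: \sum_(k < N) sigma_y k.
Definition Sz (N : nat) : 'M[C]_(2 ^ N) := 2^-1 *: \sum_(k < N) sigma_z k.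
Definition Splus (N : nat) : 'M[C]_(2 ^ N) := Sx N + 'i *: Sy N.
Definition Sminus (N : nat) : 'M[C]_(2 ^ N) := Sx N - 'i *: Sy N.
Definition Ssq (N : nat) : 'M[C]_(2 ^ N) :=
  Sx N *m Sx N + Sy N *m Sy N + Sz N *m Sz N.

Definition Ham (eps Tc : R) (N : nat) : 'M[C]_(2 ^ N) :=
  - ((2 * eps)%:C *: Sz N) - ((2 * Tc / N%:R)%:C *: (Splus N *m Sminus N)).

Definition adj (m n : nat) (A : 'M[C]_(m, n)) : 'M[C]_(n, m) :=
  (map_mx (@conjc R) A)^T.

Definition joint_eigenbasis (eps Tc : R) (N : nat)
    (e : 'I_(2 ^ N) -> 'cV[C]_(2 ^ N)) (lam : 'I_(2 ^ N) -> R) : Prop :=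
  [/\ forall a b, adj (e a) *m e b = (a == b)%:R%:M,
      forall a, Ham eps Tc N *m e a = (lam a)%:C *: e a,
      forall a, exists mu : C, Ssq N *m e a = mu *: e a &
      forall a, exists nu : C, Sz N *m e a = nu *: e a].

(* Gibbs weights r_a = e^{-beta lam_a} / sum_b e^{-beta lam_b}, so that
   rho = e^{-beta H}/Tr e^{-beta H} = sum_a r_a |e_a><e_a| *)
Definition gibbs_w (beta : R) (N : nat) (lam : 'I_(2 ^ N) -> R) (a : 'I_(2 ^ N)) : R :=
  expR (- beta * lam a) / \sum_(b < 2 ^ N) expR (- beta * lam b).

Definition rho (beta : R) (N : nat) (e : 'I_(2 ^ N) -> 'cV[C]_(2 ^ N))
    (lam : 'I_(2 ^ N) -> R) : 'M[C]_(2 ^ N) :=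
  \sum_(a < 2 ^ N) (gibbs_w beta lam a)%:C *: (e a *m adj (e a)).

Definition Omega (beta : R) (N : nat) (e : 'I_(2 ^ N) -> 'cV[C]_(2 ^ N))
    (lam : 'I_(2 ^ N) -> R) : 'cV[C]_(2 ^ N * 2 ^ N) :=
  \sum_(a < 2 ^ N) (Num.sqrt (gibbs_w beta lam a))%:C *: (e a *t e a).

Definition expect (beta : R) (N : nat) (e : 'I_(2 ^ N) -> 'cV[C]_(2 ^ N))
    (lam : 'I_(2 ^ N) -> R) (X : 'M[C]_(2 ^ N * 2 ^ N)) : C :=
  (adj (Omega beta e lam) *m X *m Omega beta e lam) 0 0.

Definition Eplus (c : R) (N : nat) : 'M[C]_(2 ^ N * 2 ^ N) :=
  ((c * N%:R)^-1)%:C *: (Splus N *t (1%:M : 'M[C]_(2 ^ N))).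
Definition Eminus (c : R) (N : nat) : 'M[C]_(2 ^ N * 2 ^ N) :=
  ((c * N%:R)^-1)%:C *: (Sminus N *t (1%:M : 'M[C]_(2 ^ N))).

End Model.

(* In the computational basis S^N_+ and S^N_- are sums of N partial permutation
   matrices, so their operator norms are at most N, and [S^N_+, S^N_-] = 2 S^N_z
   has norm at most N as well.  Moving all letters S_- of a word with n letters
   S_- and m letters S_+ to the left costs at most n m commutators, so the word
   differs from (S_-)^n (S_+)^m by an operator of norm at most n m N^(n+m-1);
   after the normalisation (c N)^-(n+m) this is O(1/N).
   On the other hand ||(A (x) 1) Omega||^2 = sum_a r_a ||A e_a||^2 <= ||A||^2, so by
   Cauchy-Schwarz |<(D (x) 1)>| <= ||D||, which gives (i), and
   |<(B (x) 1) X>| <= ||B^dagger|| ||X Omega||, which gives (ii) because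
   (E_-)^n (E_+)^m = B (x) 1 with ||B|| <= c^-(n+m).  Only c > 0 and the
   orthonormality of the eigenbasis enter; the value of c and the spectral data
   play no role. *)

From mathcomp Require Import all_boot all_order all_algebra.
From mathcomp Require Import all_classical all_reals all_analysis.
From mathcomp Require Import complex mxtens.
From mathcomp Require Import zify ring lra sesquilinear spectral.
Import Order.TTheory GRing.Theory Num.Theory numFieldNormedType.Exports.
Local Open Scope ring_scope.
Local Open Scope classical_set_scope.
Local Open Scope complex_scope.
Set Implicit Arguments.
Unset Strict Implicit.
Unset Printing Implicit Defensive.

Section Adjoint.
Variable R : realType.
Local Notation C := R[i].

Lemma adj_mul m n p (A : 'M[C]_(m, n)) (B : 'M[C]_(n, p)) :
  adj (A *m B) = adj B *m adj A.
Proof. by rewrite /adj map_mxM trmx_mul. Qed.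

Lemma adj_adj m n (A : 'M[C]_(m, n)) : adj (adj A) = A.
Proof. by apply/matrixP => i j; rewrite !mxE conjcK. Qed.

Lemma adj_add m n (A B : 'M[C]_(m, n)) : adj (A + B) = adj A + adj B.
Proof. by apply/matrixP => i j; rewrite !mxE rmorphD. Qed.

Lemma adj_scale m n a (A : 'M[C]_(m, n)) : adj (a *: A) = conjc a *: adj A.
Proof. by apply/matrixP => i j; rewrite !mxE rmorphM. Qed.

Lemma adj_sum m n I (r : seq I) (P : pred I) (F : I -> 'M[C]_(m, n)) :
  adj (\sum_(i <- r | P i) F i) = \sum_(i <- r | P i) adj (F i).
Proof.
apply: (big_morph _ (@adj_add m n)).
by apply/matrixP => i j; rewrite !mxE rmorph0.
Qed.

Lemma adj_id n : adj (1%:M : 'M[C]_n) = 1%:M.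
Proof.
by apply/matrixP => i j; rewrite !mxE eq_sym; case: eqP; rewrite ?conjc1 ?conjc0.
Qed.

Lemma adj_tens m1 n1 m2 n2 (A : 'M[C]_(m1, n1)) (B : 'M[C]_(m2, n2)) :
  adj (A *t B) = adj A *t adj B.
Proof. by rewrite /adj map_mxT trmx_tens. Qed.

End Adjoint.

Section VectorNorm.
Variable R : realType.
Local Notation C := R[i].
Variable n : nat.
Implicit Types u v : 'cV[C]_n.

Definition vdot u v : C := (adj u *m v) 0 0.
Definition vnorm v : C := sqrtC (vdot v v).

Lemma vdotE u v : vdot u v = \sum_i (u i 0)^* * v i 0.
Proof. by rewrite /vdot mxE; apply: eq_bigr => i _; rewrite !mxE. Qed.

Lemma vdot_dotmx u v : vdot u v = dotmx v^T u^T.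
Proof. by rewrite vdotE dotmxE mxE; apply: eq_bigr => i _; rewrite !mxE mulrC. Qed.

Lemma vdotvv v : vdot v v = \sum_i `|v i 0| ^+ 2.
Proof. by rewrite vdotE; apply: eq_bigr => i _; rewrite normCK mulrC. Qed.

Lemma vdot_ge0 v : 0 <= vdot v v.
Proof. by rewrite vdot_dotmx dnorm_ge0. Qed.

Lemma vnorm_ge0 v : 0 <= vnorm v.
Proof. by rewrite sqrtC_ge0 vdot_ge0. Qed.

Lemma vnorm_sqr v : vnorm v ^+ 2 = vdot v v.
Proof. exact: sqrtCK. Qed.

Lemma vnorm0 : vnorm 0 = 0.
Proof. by rewrite /vnorm /vdot mulmx0 mxE sqrtC0. Qed.

Lemma vdot_CauchySchwarz u v : `|vdot u v| <= vnorm u * vnorm v.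
Proof.
rewrite /vnorm !vdot_dotmx mulrC.
exact: (CauchySchwarz_sqrt (@dotmx C n) _ _).1.
Qed.

Lemma vnormD u v : vnorm (u + v) <= vnorm u + vnorm v.
Proof. by rewrite /vnorm !vdot_dotmx linearD; exact: (triangle_lerif _ _ _).1. Qed.

Lemma vnorm_sum I (r : seq I) (P : pred I) (F : I -> 'cV[C]_n) :
  vnorm (\sum_(i <- r | P i) F i) <= \sum_(i <- r | P i) vnorm (F i).
Proof.
elim/big_rec2: _ => [|i y1 y2 _ IH]; first by rewrite vnorm0.
by apply: le_trans (vnormD _ _) _; rewrite lerD2l.
Qed.

Lemma vdot_adjl (A : 'M[C]_n) u v :
  vdot (adj A *m u) v = vdot u (A *m v).
Proof. by rewrite /vdot adj_mul adj_adj mulmxA. Qed.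

End VectorNorm.

Section VdotLinear.
Variable R : realType.
Local Notation C := R[i].
Variable n : nat.
Implicit Types u v : 'cV[C]_n.

Lemma vdotZl a u v : vdot (a *: u) v = conjc a * vdot u v.
Proof. by rewrite /vdot adj_scale -scalemxAl mxE. Qed.

Lemma vdotZr a u v : vdot u (a *: v) = a * vdot u v.
Proof. by rewrite /vdot -scalemxAr mxE. Qed.

Lemma vdotBr u v1 v2 : vdot u (v1 - v2) = vdot u v1 - vdot u v2.
Proof. by rewrite /vdot mulmxBr !mxE. Qed.

Lemma vdot_suml I (r : seq I) (P : pred I) (F : I -> 'cV[C]_n) v :
  vdot (\sum_(i <- r | P i) F i) v = \sum_(i <- r | P i) vdot (F i) v.
Proof. by rewrite /vdot adj_sum mulmx_suml summxE. Qed.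

Lemma vdot_sumr I (r : seq I) (P : pred I) (F : I -> 'cV[C]_n) u :
  vdot u (\sum_(i <- r | P i) F i) = \sum_(i <- r | P i) vdot u (F i).
Proof. by rewrite /vdot mulmx_sumr summxE. Qed.

Lemma vdot_tens (u1 u2 v1 v2 : 'cV[C]_n) :
  vdot (u1 *t u2) (v1 *t v2) = vdot u1 v1 * vdot u2 v2.
Proof.
rewrite /vdot; have := tensmx_mul (adj u1) (adj u2) v1 v2.
rewrite -adj_tens => /(congr1 (fun M : 'M[C]_(1 * 1) => M 0 0)) /= ->.
by rewrite mxE !(ord1 (mxtens_unindex _).1) !(ord1 (mxtens_unindex _).2).
Qed.

End VdotLinear.

Section OperatorBound.
Variable R : realType.
Local Notation C := R[i].
Variable n : nat.
Implicit Types (A B : 'M[C]_n) (K L : C).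

Definition opbound A K := forall v : 'cV[C]_n, vnorm (A *m v) <= K * vnorm v.

Lemma opbound_le A K L : K <= L -> opbound A K -> opbound A L.
Proof. by move=> KL hA v; apply: le_trans (hA v) _; rewrite ler_wpM2r ?vnorm_ge0. Qed.

Lemma opbound0 K : 0 <= K -> opbound 0 K.
Proof. by move=> K0 v; rewrite mul0mx vnorm0 mulr_ge0 ?vnorm_ge0. Qed.

Lemma opbound1 : opbound 1%:M 1.
Proof. by move=> v; rewrite mul1mx mul1r. Qed.

Lemma opboundM A B K L : 0 <= K -> opbound A K -> opbound B L ->
  opbound (A * B) (K * L).
Proof.
move=> K0 hA hB v; rewrite -mulmxE -mulmxA; apply: le_trans (hA _) _.
by rewrite -mulrA ler_wpM2l.
Qed.

Lemma opboundD A B K L : opbound A K -> opbound B L -> opbound (A + B) (K + L).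
Proof.
move=> hA hB v; rewrite mulmxDl; apply: le_trans (vnormD _ _) _.
by rewrite mulrDl lerD.
Qed.

Lemma opbound_sum I (r : seq I) (P : pred I) (F : I -> 'M[C]_n) (K : I -> C) :
  (forall i, P i -> opbound (F i) (K i)) ->
  opbound (\sum_(i <- r | P i) F i) (\sum_(i <- r | P i) K i).
Proof.
move=> hF v; rewrite mulmx_suml mulr_suml; apply: le_trans (vnorm_sum _ _ _) _.
by apply: ler_sum => i Pi; apply: hF.
Qed.

Lemma opboundX A K p : 0 <= K -> opbound A K -> opbound (A ^+ p) (K ^+ p).
Proof.
move=> K0 hA; elim: p => [|p IH]; first by rewrite !expr0; exact: opbound1.
by rewrite !exprS; apply: opboundM.
Qed.

Lemma opbound_adj A K : 0 <= K -> opbound A K -> opbound (adj A) K.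
Proof.
move=> K0 hA v; set x := vnorm (adj A *m v).
have x0 : 0 <= x by exact: vnorm_ge0.
have x2 : x ^+ 2 <= x * (K * vnorm v).
  have xR : vdot v (A *m (adj A *m v)) \is Num.real.
    by rewrite -vdot_adjl ger0_real ?vdot_ge0.
  rewrite /x vnorm_sqr vdot_adjl; apply: le_trans (real_ler_norm xR) _.
  apply: le_trans (vdot_CauchySchwarz _ _) _.
  have -> : x * (K * vnorm v) = vnorm v * (K * x) by ring.
  by apply: ler_wpM2l; [exact: vnorm_ge0 | exact: hA].
have [->|xn0] := eqVneq x 0; first by rewrite mulr_ge0 ?vnorm_ge0.
have xp : 0 < x by rewrite lt_def xn0 x0.
by rewrite -(ler_pM2l xp) -expr2.
Qed.

End OperatorBound.

Section PartialPermutation.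
Variable R : realType.
Local Notation C := R[i].
Variable n : nat.

Definition ppmx (P : pred 'I_n) (g : 'I_n -> 'I_n) (d : 'I_n -> C) : 'M[C]_n :=
  \matrix_(i, j) (if P j && (i == g j) then d j else 0).

Lemma ppmx_mul P Q g h d d' :
  ppmx P g d *m ppmx Q h d' =
  ppmx (fun j => Q j && P (h j)) (g \o h) (fun j => d (h j) * d' j).
Proof.
apply/matrixP => i j; rewrite !mxE /=; case Qj: (Q j) => /=; last first.
  by rewrite big1 // => k _; rewrite !mxE Qj /= mulr0.
rewrite (bigD1 (h j)) //= big1 => [|k nk]; last first.
  by rewrite !mxE Qj /= eq_sym (negbTE nk) mulr0.
by rewrite !mxE Qj eqxx addr0 /=; case: ifP; rewrite ?mul0r.
Qed.

Lemma sqr_norm_sum_unique (Q : pred 'I_n) (F : 'I_n -> C) :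
  (forall j k, Q j -> Q k -> j = k) ->
  `|\sum_j (if Q j then F j else 0)| ^+ 2 = \sum_j (if Q j then `|F j| ^+ 2 else 0).
Proof.
move=> uQ; case: (pickP Q) => [j0 Qj0|nQ]; last first.
  by rewrite !big1 ?normr0 ?expr0n // => j _; rewrite nQ.
have others (G : 'I_n -> C) j : j != j0 -> (if Q j then G j else 0) = 0.
  by move=> nj; case: ifP => // Qj; case/eqP: nj; apply: uQ.
rewrite (bigD1 j0) //= big1 => [|j nj]; last exact: (others F).
rewrite (bigD1 j0) //= big1 => [|j nj]; last exact: (others (fun j => `|F j| ^+ 2)).
by rewrite Qj0 !addr0.
Qed.

Lemma ppmx_opbound P g d : {in P &, injective g} -> (forall j, `|d j| <= 1) ->
  opbound (ppmx P g d) 1.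
Proof.
move=> g_inj d_le1 v; rewrite mul1r ler_sqrtC ?nnegrE ?vdot_ge0 // !vdotvv.
have -> : \sum_i `|(ppmx P g d *m v) i 0| ^+ 2
        = \sum_i \sum_j (if P j && (i == g j) then `|d j * v j 0| ^+ 2 else 0).
  apply: eq_bigr => i _; rewrite mxE -sqr_norm_sum_unique; last first.
    by move=> j k /andP[Pj /eqP ->] /andP[Pk /eqP]; apply: g_inj.
  by congr (`|_| ^+ 2); apply: eq_bigr => j _; rewrite mxE; case: ifP; rewrite ?mul0r.
rewrite exchange_big /=; apply: ler_sum => j _.
case Pj: (P j) => /=; last by rewrite big1 ?sqr_ge0.
rewrite (bigD1 (g j)) //= eqxx big1 => [|i ni]; last by rewrite (negbTE ni).
rewrite addr0 normrM exprMn -[leRHS]mul1r ler_wpM2r ?exprn_ge0 //.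
by rewrite expr_le1.
Qed.

End PartialPermutation.

Section Bits.
Local Open Scope nat_scope.

Lemma bit0 i : bit i 0 = odd i.
Proof. by rewrite /bit expn0 divn1. Qed.

Lemma bitS i l : bit i l.+1 = bit i./2 l.
Proof. by rewrite /bit expnS divnMA divn2. Qed.

Lemma bit_inj N i j : i < 2 ^ N -> j < 2 ^ N ->
  (forall l, l < N -> bit i l = bit j l) -> i = j.
Proof.
elim: N i j => [|N IH] i j; first by rewrite expn0 !ltnS !leqn0 => /eqP-> /eqP->.
move=> ltiN ltjN eq_bits.
rewrite -(odd_double_half i) -(odd_double_half j) -!bit0 eq_bits //.
congr (_ + _.*2); apply: IH => [||l lt_lN]; rewrite -?bitS ?eq_bits //.
  by rewrite ltn_half_double -mul2n -expnS.
by rewrite ltn_half_double -mul2n -expnS.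
Qed.

Lemma bit_exists N (f : nat -> bool) :
  {i | i < 2 ^ N & forall l, l < N -> bit i l = f l}.
Proof.
elim: N f => [|N IH] f; first by exists 0.
have [i lt_iN bits_i] := IH (fun l => f l.+1).
exists (f 0 + i.*2); first by rewrite expnS; case: (f 0) => /=; lia.
case=> [|l] lt_lN; first by rewrite bit0 oddD odd_double addbF; case: (f 0).
by rewrite bitS half_bit_double bits_i.
Qed.

End Bits.

Section Flip.
Variable N : nat.

Definition flip (k : 'I_N) (j : 'I_(2 ^ N)) : 'I_(2 ^ N) :=
  Ordinal (s2valP (bit_exists N (fun l => if l == k then ~~ bit j k else bit j l))).

Lemma bit_flip k j l : (l < N)%N ->
  bit (flip k j) l = if l == k then ~~ bit j k else bit j l.
Proof. by move=> lt_lN; rewrite /flip /=; case: bit_exists => i _ /= ->. Qed.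

Lemma bit_flip_other (k l : 'I_N) j : k != l -> bit (flip l j) k = bit j k.
Proof. by move=> nkl; rewrite bit_flip // (negbTE (nkl : (k : nat) != l)). Qed.

Lemma ord_bit_inj (i j : 'I_(2 ^ N)) :
  (forall l, (l < N)%N -> bit i l = bit j l) -> i = j.
Proof. by move=> eq_bits; apply/val_inj/(bit_inj (ltn_ord i) (ltn_ord j)). Qed.

Lemma flipK k : involutive (flip k).
Proof.
move=> j; apply: ord_bit_inj => l lt_lN; rewrite !bit_flip //.
by case: eqP => // ->; rewrite eqxx negbK.
Qed.

Lemma flip_inj k : injective (flip k).
Proof. exact: inv_inj (flipK k). Qed.

Lemma flipC (k l : 'I_N) j : k != l -> flip k (flip l j) = flip l (flip k j).
Proof.
move=> nkl; apply: ord_bit_inj => m lt_mN; rewrite !bit_flip //.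
have {}nkl : (k : nat) != l := nkl.
have nlk : (l : nat) != k by rewrite eq_sym.
rewrite (negbTE nkl) (negbTE nlk).
by case: eqP => [mk|_]; case: eqP => [ml|_] //; move: nkl; rewrite -mk -ml eqxx.
Qed.

Lemma flip_eq k (i j : 'I_(2 ^ N)) :
  (i == flip k j) = others_eq k i j && (bit i k != bit j k).
Proof.
apply/eqP/andP => [->|[/forallP same_others diff_k]].
  split; last by rewrite bit_flip // eqxx; case: (bit j k).
  apply/forallP => l; apply/implyP => nlk.
  by rewrite bit_flip // (inj_eq val_inj) (negbTE nlk).
apply: ord_bit_inj => l lt_lN; rewrite bit_flip //.
case: eqP => [->|nlk]; first by move: diff_k; case: (bit i k); case: (bit j k).
have /implyP := same_others (Ordinal lt_lN); rewrite -(inj_eq val_inj) /=.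
by move/(_ (introN eqP nlk))/eqP.
Qed.

End Flip.

Section Spin.
Variable R : realType.
Local Notation C := R[i].
Variable N : nat.

(* (sigma_x^(k) +- i sigma_y^(k)) / 2; digit 1 encodes spin down, so sigma_plus k
   acts on the basis states whose k-th digit is 1. *)
Definition sigma_plus (k : 'I_N) : 'M[C]_(2 ^ N) :=
  ppmx (fun j => bit j k) (flip k) (fun=> 1).
Definition sigma_minus (k : 'I_N) : 'M[C]_(2 ^ N) :=
  ppmx (fun j => ~~ bit j k) (flip k) (fun=> 1).

Let mul_ii : 'i * 'i = -1 :> C.
Proof. by rewrite -expr2 sqr_i. Qed.

Let half_add_half : 2^-1 + 2^-1 = 1 :> C.
Proof. by rewrite [RHS](splitr 1) div1r. Qed.

Lemma Splus_sum : Splus R N = \sum_k sigma_plus k.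
Proof.
apply/matrixP => i j; rewrite !mxE !summxE !mulr_sumr -big_split /=.
apply: eq_bigr => k _; rewrite !mxE flip_eq.
case: (others_eq k i j); rewrite ?andbF ?mulr0 ?addr0 //=.
case: (bit i k); case: (bit j k) => /=; rewrite ?mulr0 ?addr0 //.
  by rewrite mulr1 (mulrCA 'i) mul_ii mulrN1 subrr.
by rewrite mulr1 !mulrN (mulrCA 'i) mul_ii mulrN1 opprK half_add_half.
Qed.

Lemma Sminus_sum : Sminus R N = \sum_k sigma_minus k.
Proof.
apply/matrixP => i j; rewrite !mxE !summxE !mulr_sumr -sumrN -big_split /=.
apply: eq_bigr => k _; rewrite !mxE flip_eq.
case: (others_eq k i j); rewrite ?andbF ?mulr0 ?subr0 //=.
case: (bit i k); case: (bit j k) => /=; rewrite ?mulr0 ?subr0 //.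
  by rewrite mulr1 (mulrCA 'i) mul_ii mulrN1 opprK half_add_half.
by rewrite mulr1 !mulrN (mulrCA 'i) mul_ii mulrN1 opprK subrr.
Qed.

Lemma sigma_z_ppmx (k : 'I_N) :
  sigma_z R k = ppmx predT id (fun j => if bit j k then -1 else 1).
Proof. by apply/matrixP => i j; rewrite !mxE; case: eqP => // ->. Qed.

Lemma opbound_sum_ord (F : 'I_N -> 'M[C]_(2 ^ N)) :
  (forall k, opbound (F k) 1) -> opbound (\sum_k F k) N%:R.
Proof.
move=> hF.
have := @opbound_sum _ _ _ (index_enum 'I_N) xpredT _ (fun=> 1) (fun k _ => hF k).
by rewrite sumr_const card_ord.
Qed.

Lemma sigma_plus_opbound k : opbound (sigma_plus k) 1.
Proof. by apply: ppmx_opbound => [i j _ _|j]; [exact: flip_inj | rewrite normr1]. Qed.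

Lemma sigma_minus_opbound k : opbound (sigma_minus k) 1.
Proof. by apply: ppmx_opbound => [i j _ _|j]; [exact: flip_inj | rewrite normr1]. Qed.

Lemma sigma_z_opbound (k : 'I_N) : opbound (sigma_z R k) 1.
Proof.
rewrite sigma_z_ppmx; apply: ppmx_opbound => [i j _ _ //|j].
by case: (bit j k); rewrite ?normrN normr1.
Qed.

Lemma Splus_opbound : opbound (Splus R N) N%:R.
Proof. by rewrite Splus_sum; apply: opbound_sum_ord; exact: sigma_plus_opbound. Qed.

Lemma Sminus_opbound : opbound (Sminus R N) N%:R.
Proof. by rewrite Sminus_sum; apply: opbound_sum_ord; exact: sigma_minus_opbound. Qed.

Lemma sigma_plus_minus_comm (k : 'I_N) :
  sigma_plus k * sigma_minus k - sigma_minus k * sigma_plus k = sigma_z R k.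
Proof.
rewrite -!mulmxE !ppmx_mul; apply/matrixP => i j; rewrite !mxE /= flipK.
rewrite bit_flip // eqxx negbK andbb mulr1.
case: eqP => [->|_]; last by rewrite !andbF subrr.
by case: (bit j k); rewrite /= ?subr0 ?sub0r.
Qed.

Lemma sigma_plus_minus_commute (k l : 'I_N) : k != l ->
  sigma_plus k * sigma_minus l = sigma_minus l * sigma_plus k.
Proof.
move=> nkl; rewrite -!mulmxE !ppmx_mul; apply/matrixP => i j; rewrite !mxE /=.
rewrite bit_flip_other // bit_flip_other 1?eq_sym // flipC // [flip _ _ == i]eq_sym.
by case: (bit j k); case: (bit j l).
Qed.

Lemma Splus_Sminus_comm :
  Splus R N * Sminus R N - Sminus R N * Splus R N = \sum_k sigma_z R k.
Proof.
rewrite Splus_sum Sminus_sum !mulr_suml.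
under eq_bigr do rewrite mulr_sumr.
under [X in _ - X]eq_bigr do rewrite mulr_sumr.
rewrite [X in _ - X]exchange_big -sumrB; apply: eq_bigr => k _.
rewrite -sumrB (bigD1 k) //= big1 ?addr0 ?sigma_plus_minus_comm // => l nlk.
by rewrite sigma_plus_minus_commute 1?eq_sym // subrr.
Qed.

Lemma Splus_Sminus_comm_opbound :
  opbound (Splus R N * Sminus R N - Sminus R N * Splus R N) N%:R.
Proof. by rewrite Splus_Sminus_comm; apply: opbound_sum_ord; exact: sigma_z_opbound. Qed.

End Spin.

Section NormalOrder.
Variable R : realType.
Local Notation C := R[i].
Variables (d : nat) (a b : 'M[C]_d) (K : C).
Hypothesis K_gt0 : 0 < K.
Hypothesis a_bound : opbound a K.
Hypothesis b_bound : opbound b K.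
Hypothesis comm_bound : opbound (b * a - a * b) K.

Let K_ge0 : 0 <= K. Proof. exact: ltW. Qed.
Let K_neq0 : K != 0. Proof. exact: lt0r_neq0. Qed.

Let bound_ge0 p q : 0 <= p%:R * K ^+ q / K.
Proof. by rewrite divr_ge0 ?mulr_ge0 ?exprn_ge0. Qed.

Lemma commutator_exp_opbound p :
  opbound (b * a ^+ p - a ^+ p * b) (p%:R * K ^+ p).
Proof.
elim: p => [|p IH]; first by rewrite expr0 mulr1 mul1r subrr mul0r; exact: opbound0.
have -> : b * a ^+ p.+1 - a ^+ p.+1 * b =
          (b * a ^+ p - a ^+ p * b) * a + a ^+ p * (b * a - a * b).
  by rewrite mulrBl mulrBr !mulrA !exprSr !mulrA addrA subrK.
have := opboundD (opboundM (mulr_ge0 (ler0n _ _) (exprn_ge0 _ K_ge0)) IH a_bound)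
  (opboundM (exprn_ge0 _ K_ge0) (opboundX p K_ge0 a_bound) comm_bound).
suff -> : p%:R * K ^+ p * K + K ^+ p * K = p.+1%:R * K ^+ p.+1 by [].
by rewrite exprS mulrS; ring.
Qed.

Lemma commutator_exp2_opbound m p :
  opbound (b ^+ m * a ^+ p - a ^+ p * b ^+ m) ((m * p)%:R * K ^+ (m + p) / K).
Proof.
elim: m => [|m IH]; first by rewrite expr0 mulr1 mul1r subrr mul0r mul0r; exact: opbound0.
have -> : b ^+ m.+1 * a ^+ p - a ^+ p * b ^+ m.+1 =
          b * (b ^+ m * a ^+ p - a ^+ p * b ^+ m) + (b * a ^+ p - a ^+ p * b) * b ^+ m.
  by rewrite !mulrBl !mulrBr !mulrA !exprS !mulrA addrA subrK.
have := opboundD (opboundM K_ge0 b_bound IH)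
  (opboundM (mulr_ge0 (ler0n _ _) (exprn_ge0 _ K_ge0)) (commutator_exp_opbound p)
     (opboundX m K_ge0 b_bound)).
suff -> : K * ((m * p)%:R * K ^+ (m + p) / K) + p%:R * K ^+ p * K ^+ m
        = (m.+1 * p)%:R * K ^+ (m.+1 + p) / K by [].
by rewrite addSn !exprS !exprD mulSn natrD natrM; field; exact: K_neq0.
Qed.

Lemma normal_order_opbound r (ns ms : 'I_r -> nat) :
  opbound (\prod_(j < r) (a ^+ ns j * b ^+ ms j)
           - a ^+ (\sum_(j < r) ns j) * b ^+ (\sum_(j < r) ms j))
    (((\sum_(j < r) ns j) * (\sum_(j < r) ms j))%:R
       * K ^+ (\sum_(j < r) ns j + \sum_(j < r) ms j) / K).
Proof.
elim: r ns ms => [|r IH] ns ms.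
  by rewrite !big_ord0 !expr0 mulr1 subrr mul0r mul0r; exact: opbound0.
rewrite !big_ord_recr /=.
set A := \sum_(j < r) ns _; set B := \sum_(j < r) ms _.
set X := \prod_(j < r) _; set p := ns ord_max; set q := ms ord_max.
have -> : X * (a ^+ p * b ^+ q) - a ^+ (A + p) * b ^+ (B + q)
  = (X - a ^+ A * b ^+ B) * a ^+ p * b ^+ q
    + a ^+ A * (b ^+ B * a ^+ p - a ^+ p * b ^+ B) * b ^+ q.
  by rewrite !mulrBl !mulrBr !mulrA !exprD !mulrA mulrBl addrA subrK.
have IHr := opboundM (mulr_ge0 (bound_ge0 _ _) (exprn_ge0 _ K_ge0))
  (opboundM (bound_ge0 _ _)
     (IH (fun j => ns (widen_ord (leqnSn r) j)) (fun j => ms (widen_ord (leqnSn r) j)))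
     (opboundX p K_ge0 a_bound))
  (opboundX q K_ge0 b_bound).
have reorder := opboundM (mulr_ge0 (exprn_ge0 A K_ge0) (bound_ge0 _ _))
  (opboundM (exprn_ge0 A K_ge0) (opboundX A K_ge0 a_bound) (commutator_exp2_opbound B p))
  (opboundX q K_ge0 b_bound).
apply: opbound_le _ (opboundD IHr reorder).
rewrite -/A -/B; set L := K ^+ (A + p + (B + q)).
have -> : (A * B)%:R * K ^+ (A + B) / K * K ^+ p * K ^+ q
          + K ^+ A * ((B * p)%:R * K ^+ (B + p) / K) * K ^+ q
          = (A * B + B * p)%:R * L / K.
  by rewrite /L !exprD natrD !natrM; field; exact: K_neq0.
by rewrite ler_pM2r ?invr_gt0 // ler_pM2r ?exprn_gt0 // ler_nat; nia.
Qed.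

End NormalOrder.

Section TensorOne.
Variable R : realType.
Local Notation C := R[i].
Variable n : nat.
Local Notation I := (1%:M : 'M[C]_n).
Implicit Types A B : 'M[C]_n.

Lemma tens1mx_mul A B : (A *t I) *m (B *t I) = (A *m B) *t I.
Proof. by rewrite tensmx_mul mulmx1. Qed.

Lemma tens1mx_mul_tens A (u v : 'cV[C]_n) :
  (A *t I) *m (u *t v : 'cV_(n * n)) = ((A *m u) *t v : 'cV_(n * n)).
Proof. by have := tensmx_mul A I u v; rewrite mul1mx. Qed.

Lemma tens1mx1 : I *t I = 1%:M.
Proof.
apply/matrixP => i j.
case: (mxtens_indexP i) => i1 i2; case: (mxtens_indexP j) => j1 j2.
rewrite tensmxE !mxE (inj_eq (can_inj (@mxtens_indexK _ _))) xpair_eqE.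
by case: (i1 == j1); case: (i2 == j2); rewrite ?mulr1 ?mulr0 ?mul0r.
Qed.

Lemma tens1mxB A B : (A - B) *t I = A *t I - B *t I.
Proof. by apply/matrixP => i j; rewrite !mxE mulrBl. Qed.

Lemma scale_tens1mxX k A p : (k *: (A *t I)) ^+ p = k ^+ p *: (A ^+ p *t I).
Proof.
elim: p => [|p IH]; first by rewrite !expr0 scale1r tens1mx1.
by rewrite !exprS IH -!mulmxE -scalemxAl -scalemxAr scalerA tens1mx_mul.
Qed.

Lemma scale_tens1mx_mul k A B p q :
  (k *: (A *t I)) ^+ p *m (k *: (B *t I)) ^+ q = k ^+ (p + q) *: ((A ^+ p * B ^+ q) *t I).
Proof.
by rewrite !scale_tens1mxX -scalemxAl -scalemxAr scalerA -exprD tens1mx_mul mulmxE.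
Qed.

Lemma scale_tens1mx_prod k A B r (ps qs : 'I_r -> nat) :
  \prod_(j < r) ((k *: (A *t I)) ^+ ps j *m (k *: (B *t I)) ^+ qs j) =
  k ^+ (\sum_(j < r) ps j + \sum_(j < r) qs j) *:
    ((\prod_(j < r) (A ^+ ps j * B ^+ qs j)) *t I).
Proof.
elim: r ps qs => [|r IH] ps qs; first by rewrite !big_ord0 expr0 scale1r tens1mx1.
rewrite !big_ord_recr /= IH scale_tens1mx_mul -mulmxE -scalemxAl -scalemxAr scalerA.
by rewrite -exprD tens1mx_mul mulmxE addnACA.
Qed.

End TensorOne.

Section ComplexOfReal.
Variable R : realType.
Local Notation C := R[i].

Lemma conjc_sqrt_mul (x : R) : 0 <= x -> conjc (Num.sqrt x)%:C * (Num.sqrt x)%:C = x%:C.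
Proof.
move=> x_ge0; apply/eqP; rewrite eq_complex /= oppr0 !mulr0 !mul0r subr0 addr0.
by rewrite -expr2 sqr_sqrtr // !eqxx.
Qed.

Lemma normc_ge0 (z : C) : 0 <= Normc.normc z.
Proof. by have := normr_ge0 z; rewrite -[`|z|]/((Normc.normc z)%:C) ler0c. Qed.

Lemma normc_le (z : C) (b : R) : `|z| <= b%:C -> Normc.normc z <= b.
Proof. by rewrite -lecR. Qed.

Lemma sqrtC_normc (z : C) : 0 <= z -> sqrtC z = (Num.sqrt (Normc.normc z))%:C.
Proof.
move=> z_ge0; have x_ge0 := normc_ge0 z; set x := Normc.normc z in x_ge0 *.
have -> : z = (Num.sqrt x)%:C ^+ 2 by rewrite -rmorphXn /= sqr_sqrtr // -[LHS]ger0_norm.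
by rewrite sqrCK // ler0c sqrtr_ge0.
Qed.

End ComplexOfReal.

Section Expectation.
Variable R : realType.
Local Notation C := R[i].
Variables (N : nat) (beta : R).
Variables (e : 'I_(2 ^ N) -> 'cV[C]_(2 ^ N)) (lam : 'I_(2 ^ N) -> R).
Hypothesis e_orthonormal : forall a b, adj (e a) *m e b = (a == b)%:R%:M.
Local Notation w := (gibbs_w beta lam).
Local Notation Om := (Omega beta e lam).
Local Notation I := (1%:M : 'M[C]_(2 ^ N)).
Implicit Types (A B D : 'M[C]_(2 ^ N)) (X Y : 'M[C]_(2 ^ N * 2 ^ N)).

Lemma gibbs_w_ge0 a : 0 <= w a.
Proof. by rewrite divr_ge0 ?expR_ge0 // sumr_ge0 // => b _; rewrite expR_ge0. Qed.

Lemma gibbs_w_sum : \sum_a w a = 1.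
Proof.
rewrite -mulr_suml mulfV // gt_eqF // (bigD1 (Ordinal (expn_gt0 2 N))) //=.
by rewrite ltr_pwDl ?expR_gt0 // sumr_ge0 // => b _; rewrite expR_ge0.
Qed.

Lemma vdot_e a b : vdot (e a) (e b) = (a == b)%:R.
Proof. by rewrite /vdot e_orthonormal mxE eqxx mulr1n. Qed.

Lemma vnorm_e a : vnorm (e a) = 1.
Proof. by rewrite /vnorm vdot_e eqxx sqrtC1. Qed.

Lemma expectE X : expect beta e lam X = vdot Om (X *m Om).
Proof. by rewrite /expect /vdot mulmxA. Qed.

Lemma expectB X Y :
  expect beta e lam (X - Y) = expect beta e lam X - expect beta e lam Y.
Proof. by rewrite !expectE mulmxBl vdotBr. Qed.

Lemma expectZ k X : expect beta e lam (k *: X) = k * expect beta e lam X.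
Proof. by rewrite !expectE -scalemxAl vdotZr. Qed.

Lemma expect_tens1 B :
  expect beta e lam (B *t I) = \sum_a (w a)%:C * vdot (e a) (B *m e a).
Proof.
rewrite expectE [in X in vdot X]/Omega vdot_suml; apply: eq_bigr => a _.
rewrite vdotZl /Omega mulmx_sumr vdot_sumr (bigD1 a) //= big1 => [|b nba].
  rewrite addr0 -scalemxAr tens1mx_mul_tens vdotZr vdot_tens vdot_e eqxx mulr1.
  by rewrite mulrA conjc_sqrt_mul ?gibbs_w_ge0.
by rewrite -scalemxAr tens1mx_mul_tens vdotZr vdot_tens vdot_e eq_sym (negbTE nba) !mulr0.
Qed.

Lemma vnorm_tens1_Omega_le A K : 0 <= K -> opbound A K -> vnorm ((A *t I) *m Om) <= K.
Proof.
move=> K0 hA; rewrite -(sqrCK K0) ler_sqrtC ?nnegrE ?vdot_ge0 ?exprn_ge0 //.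
rewrite -[X in vdot (X *m _)](adj_adj (A *t I)) vdot_adjl mulmxA.
rewrite adj_tens adj_id tens1mx_mul -expectE expect_tens1.
have -> : K ^+ 2 = \sum_a (w a)%:C * K ^+ 2.
  by rewrite -mulr_suml -rmorph_sum /= gibbs_w_sum mul1r.
apply: ler_sum => a _; apply: ler_wpM2l; first by rewrite ler0c gibbs_w_ge0.
rewrite -mulmxA -vdot_adjl adj_adj -vnorm_sqr lerXn2r ?nnegrE ?vnorm_ge0 //.
by have := hA (e a); rewrite vnorm_e mulr1.
Qed.

Lemma vnorm_Omega_le : vnorm Om <= 1.
Proof. by have := vnorm_tens1_Omega_le ler01 (@opbound1 R (2 ^ N)); rewrite tens1mx1 mul1mx. Qed.

Lemma expect_tens1_le D K : 0 <= K -> opbound D K -> `|expect beta e lam (D *t I)| <= K.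
Proof.
move=> K0 hD; rewrite expectE; apply: le_trans (vdot_CauchySchwarz _ _) _.
rewrite -[K]mul1r; apply: ler_pM; rewrite ?vnorm_ge0 //; first exact: vnorm_Omega_le.
exact: vnorm_tens1_Omega_le.
Qed.

Lemma expect_adj_mul X : expect beta e lam (adj X *m X) = vdot (X *m Om) (X *m Om).
Proof. by rewrite expectE -mulmxA -vdot_adjl adj_adj. Qed.

Lemma expect_tens1_mul_le B X K : 0 <= K -> opbound (adj B) K ->
  `|expect beta e lam ((B *t I) *m X)| <= K * vnorm (X *m Om).
Proof.
move=> K0 hB; rewrite expectE -mulmxA -vdot_adjl adj_tens adj_id.
apply: le_trans (vdot_CauchySchwarz _ _) _; apply: ler_wpM2r; first exact: vnorm_ge0.
exact: vnorm_tens1_Omega_le.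
Qed.

End Expectation.

Section ScaledSpinBounds.
Variable R : realType.
Local Notation C := R[i].
Variables (c beta : R) (N : nat).
Variables (e : 'I_(2 ^ N) -> 'cV[C]_(2 ^ N)) (lam : 'I_(2 ^ N) -> R).
Hypothesis c_gt0 : 0 < c.
Hypothesis N_gt0 : (0 < N)%N.
Hypothesis e_orthonormal : forall a b, adj (e a) *m e b = (a == b)%:R%:M.

Let k : C := ((c * N%:R)^-1)%:C.
Let k_ge0 : 0 <= k.
Proof. by rewrite ler0c invr_ge0 mulr_ge0 ?ler0n ?ltW. Qed.
Let c_neq0 : c%:C != 0.
Proof. by rewrite (inj_eq (@complexI R)) gt_eqF. Qed.
Let N_gt0C : (0 : C) < N%:R.
Proof. by rewrite ltr0n. Qed.
Let N_neq0 : (N%:R : C) != 0.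
Proof. exact: lt0r_neq0. Qed.

Lemma expect_normal_order_le r (ns ms : 'I_r -> nat) :
  Normc.normc (expect beta e lam (\prod_(j < r) (Eminus c N ^+ ns j *m Eplus c N ^+ ms j))
       - expect beta e lam (Eminus c N ^+ (\sum_(j < r) ns j) *m Eplus c N ^+ (\sum_(j < r) ms j)))
  <= ((\sum_(j < r) ns j) * (\sum_(j < r) ms j))%:R
       / c ^+ (\sum_(j < r) ns j + \sum_(j < r) ms j) / N%:R.
Proof.
rewrite /Eminus /Eplus -/k scale_tens1mx_prod scale_tens1mx_mul !expectZ -mulrBr.
rewrite -expectB -tens1mxB; apply: normc_le; rewrite normrM normrX (ger0_norm k_ge0).
set A := \sum_(j < r) ns j; set B := \sum_(j < r) ms j.
have hD := normal_order_opbound N_gt0C (@Sminus_opbound R N) (@Splus_opbound R N)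
  (@Splus_Sminus_comm_opbound R N) ns ms.
have -> : ((A * B)%:R / c ^+ (A + B) / N%:R)%:C
          = k ^+ (A + B) * ((A * B)%:R * N%:R ^+ (A + B) / N%:R).
  rewrite /k !(rmorphM, rmorphXn, fmorphV, rmorph_nat) /= exprVn exprMn.
  by field; rewrite N_neq0 !expf_neq0 ?c_neq0.
apply: ler_wpM2l; first exact: exprn_ge0.
apply: (expect_tens1_le beta lam e_orthonormal _ hD).
by rewrite divr_ge0 ?mulr_ge0 ?exprn_ge0 ?ler0n.
Qed.

Lemma expect_mul_le (X : 'M[C]_(2 ^ N * 2 ^ N)) n m :
  Normc.normc (expect beta e lam (Eminus c N ^+ n *m Eplus c N ^+ m *m X))
  <= (c ^+ (n + m))^-1 * Num.sqrt (Normc.normc (expect beta e lam (adj X *m X))).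
Proof.
rewrite /Eminus /Eplus -/k scale_tens1mx_mul -scalemxAl expectZ.
apply: normc_le; rewrite normrM normrX (ger0_norm k_ge0).
have N_ge0 : (0 : C) <= N%:R by exact: ltW.
have K_ge0 : (0 : C) <= N%:R ^+ n * N%:R ^+ m by rewrite mulr_ge0 ?exprn_ge0.
have hB := opbound_adj K_ge0 (opboundM (exprn_ge0 n N_ge0)
  (opboundX n N_ge0 (@Sminus_opbound R N)) (opboundX m N_ge0 (@Splus_opbound R N))).
have -> : ((c ^+ (n + m))^-1 * Num.sqrt (Normc.normc (expect beta e lam (adj X *m X))))%:C
          = k ^+ (n + m) * (N%:R ^+ n * N%:R ^+ m * vnorm (X *m Omega beta e lam)).
  rewrite rmorphM /= -sqrtC_normc; last by rewrite expect_adj_mul vdot_ge0.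
  rewrite expect_adj_mul -/(vnorm _) /k !(rmorphM, rmorphXn, fmorphV, rmorph_nat) /=.
  rewrite exprVn !exprMn !exprD.
  by field; rewrite !expf_neq0 ?N_neq0 ?c_neq0.
apply: ler_wpM2l; first exact: exprn_ge0.
exact: (expect_tens1_mul_le beta lam e_orthonormal).
Qed.

End ScaledSpinBounds.

Section Squeeze.
Variable R : realType.
Implicit Types (u v : nat -> R) (K : R).

Lemma inv_nat_le_harmonic N : (0 < N)%N -> (N%:R : R)^-1 <= 2 * harmonic N.
Proof.
move=> N_gt0; have N_ge1 : (1 : R) <= N%:R by rewrite ler1n.
rewrite /harmonic /= -[leLHS]mul1r ler_pdivrMr ?ltr0n // mulrAC ler_pdivlMr ?ltr0n //.
by rewrite mul1r -addn1 natrD; lra.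
Qed.

Lemma cvg0_le_inv_nat u K :
  (forall N, (0 < N)%N -> 0 <= u N <= K / N%:R) -> u @ \oo --> 0.
Proof.
move=> u_bound; have K_ge0 : 0 <= K.
  have /andP[u_ge0 u_le] := u_bound 1%N isT.
  by rewrite -[K]divr1 (le_trans u_ge0 u_le).
apply: (@squeeze_cvgr _ _ _ _ (fun=> 0) (fun N => 2 * K * harmonic N)).
- exists 1%N => // N /= N_gt0; have /andP[-> /le_trans->] // := u_bound N N_gt0.
  by rewrite -mulrA mulrCA ler_wpM2l // inv_nat_le_harmonic.
- exact: cvg_cst.
- by rewrite -(mulr0 (2 * K)); apply: cvgMl_tmp; exact: cvg_harmonic.
Qed.

Lemma cvg0_le_sqrt u v K :
  (forall N, (0 < N)%N -> 0 <= u N <= K * Num.sqrt (v N)) ->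
  v @ \oo --> 0 -> u @ \oo --> 0.
Proof.
move=> u_bound v_cvg0.
apply: (@squeeze_cvgr _ _ _ _ (fun=> 0) (fun N => K * Num.sqrt (v N))).
- by exists 1%N => // N /= /u_bound.
- exact: cvg_cst.
- rewrite -(mulr0 K) -sqrtr0; apply: cvgMl_tmp.
  exact: (continuous_cvg _ (@sqrt_continuous R 0) v_cvg0).
Qed.

End Squeeze.

Theorem corollary1 (R : realType) (eps Tc beta c : R)
  (e : forall N : nat, 'I_(2 ^ N) -> 'cV[R[i]]_(2 ^ N))
  (lam : forall N : nat, 'I_(2 ^ N) -> R) :
  0 < Tc -> 0 < beta ->
  (forall N, joint_eigenbasis eps Tc (e N) (lam N)) ->
  (* c = lim_N (N^-2 Tr[rho S_+ S_-])^(1/2), assumed > 0 *)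
  (fun N : nat => Num.sqrt
     (complex.Re (\tr (rho beta (e N) (lam N) *m (Splus R N *m Sminus R N)))
      / N%:R ^+ 2)) @ \oo --> c ->
  0 < c ->
  (* (i) *)
  (forall (r : nat) (n m : 'I_r -> nat),
     (fun N : nat =>
        Normc.normc (expect beta (e N) (lam N)
                 (\prod_(j < r) (Eminus c N ^+ n j *m Eplus c N ^+ m j))
               - expect beta (e N) (lam N)
                 (Eminus c N ^+ (\sum_(j < r) n j) *m Eplus c N ^+ (\sum_(j < r) m j))))
       @ \oo --> (0 : R))
  /\
  (* (ii) *)
  (forall X : forall N : nat, 'M[R[i]]_(2 ^ N * 2 ^ N),
     (fun N : nat => Normc.normc (expect beta (e N) (lam N) (adj (X N) *m X N)))
       @ \oo --> (0 : R) ->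
     forall n m : nat,
       (fun N : nat =>
          Normc.normc (expect beta (e N) (lam N) (Eminus c N ^+ n *m Eplus c N ^+ m *m X N)))
         @ \oo --> (0 : R)).
Proof.
move=> _ _ eigenbasis _ c_gt0.
have orthonormal N : forall a b, adj (e N a) *m e N b = (a == b)%:R%:M.
  by case: (eigenbasis N).
split=> [r n m | X X_cvg0 n m].
  apply: cvg0_le_inv_nat => N N_gt0; rewrite normc_ge0 /=.
  exact: expect_normal_order_le.
apply: cvg0_le_sqrt X_cvg0 => N N_gt0; rewrite normc_ge0 /=.
exact: expect_mul_le.
Qed.
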